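(* Let $x=(x_n)_{n\in\mathbb{Z}}$ be a real-valued sequence and let $i,j$ be two integers in the same connected component of the record graph of $x$. Then $i<j$ in $\mathbb{Z}$ if and only if $i\prec j$ in the RLS order of that component.
   Context: The record map is $R_x(i)=\inf\{n>i: \sum_{l=i}^{n-1}x_l\ge0\}$ if this set is nonempty, and $R_x(i)=i$ otherwise; the record graph has vertex set $\mathbb{Z}$ and directed edges $i\to R_x(i)$ for $R_x(i)\neq i$ (so $R_x(i)$ is the parent of $i$); components are in the undirected sense. Each component is an ordered Family Tree with the children of each vertex ordered by the order of $\mathbb{Z}$. Its RLS order $\prec$: for distinct vertices $u,v$, $u\prec v$ if $v=R_x^k(u)$ for some $k>0$, or if $w=R_x^m(u)=R_x^n(v)$ is their common ancestor with $m,n\ge1$ minimal and $R_x^{m-1}(u)<R_x^{n-1}(v)$ (comparison as children of $w$). *)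

From Stdlib Require Import Reals ZArith Lia ClassicalEpsilon Relations.
Open Scope R_scope.

Fixpoint psum (x : Z -> R) (i : Z) (k : nat) : R :=
  match k with
  | O => 0
  | S k' => psum x i k' + x (i + Z.of_nat k')%Z
  end.

Definition blocksum (x : Z -> R) (i n : Z) : R := psum x i (Z.to_nat (n - i)).

Definition recset (x : Z -> R) (i n : Z) : Prop :=
  (i < n)%Z /\ blocksum x i n >= 0.

(* n is the value of the record map at i: the infimum (= minimum, the set
   being a set of integers bounded below) of recset if nonempty, i otherwise. *)
Definition is_record_value (x : Z -> R) (i n : Z) : Prop :=
  (recset x i n /\ forall m, recset x i m -> (n <= m)%Z)
  \/ ((forall m, ~ recset x i m) /\ n = i).

Definition recmap (x : Z -> R) (i : Z) : Z :=
  epsilon (inhabits i) (fun n => is_record_value x i n).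

Definition rec_edge (x : Z -> R) (i j : Z) : Prop :=
  recmap x i <> i /\ j = recmap x i.

Definition same_component (x : Z -> R) (i j : Z) : Prop :=
  clos_refl_sym_trans Z (rec_edge x) i j.

Definition recit (x : Z -> R) (k : nat) (u : Z) : Z := Nat.iter k (recmap x) u.

Definition rls_lt (x : Z -> R) (u v : Z) : Prop :=
  u <> v /\
  ((exists k : nat, (0 < k)%nat /\ v = recit x k u)
   \/
   (exists m n : nat,
      (1 <= m)%nat /\ (1 <= n)%nat /\ recit x m u = recit x n v /\
      (forall m' n' : nat, (1 <= m')%nat -> (1 <= n')%nat ->
          recit x m' u = recit x n' v -> (m <= m')%nat /\ (n <= n')%nat) /\
      (recit x (m - 1) u < recit x (n - 1) v)%Z)).

(* Read each record arc [i, R i] as an interval.  Arcs never cross: if c < b < R c then the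
   partial sums from c to b are negative, so those from b to R c are nonnegative and
   R b <= R c.  Iterating, nothing in [d, R^k d) jumps beyond R^k d.  Now let a and b be the
   children of the nearest common ancestor w of u < v lying on the paths from u and from v.
   If b < a, then u <= v <= b < a and R b = w > a (w <> a by minimality of the meeting), so
   the arc from b crosses the path from u: impossible.  Hence a <= b, a = b forces v to be an
   ancestor of u, and exchanging u and v gives the converse. *)

From Stdlib Require Import Reals ZArith.
From Stdlib Require Import Lia Lra Classical ClassicalEpsilon Wf_nat.

Lemma nat_least_witness (P : nat -> Prop) :
  (exists n, P n) -> exists n, P n /\ forall m, P m -> (n <= m)%nat.
Proof.
  intros Hex.
  destruct (dec_inh_nat_subset_has_unique_least_element P (fun n => classic (P n)) Hex)
    as [n [Hn _]].
  exists n. exact Hn.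
Qed.

Lemma Z_least_witness (P : Z -> Prop) (lo : Z) :
  (forall n, P n -> (lo <= n)%Z) -> (exists n, P n) ->
  exists n, P n /\ forall m, P m -> (n <= m)%Z.
Proof.
  intros Hlo [n Hn].
  destruct (nat_least_witness (fun k => P (lo + Z.of_nat k)%Z)) as [k [Hk Hmin]].
  { exists (Z.to_nat (n - lo)).
    rewrite Z2Nat.id by (specialize (Hlo n Hn); lia).
    replace (lo + (n - lo))%Z with n by lia. exact Hn. }
  exists (lo + Z.of_nat k)%Z. split; [exact Hk |].
  intros m Hm. specialize (Hlo m Hm).
  specialize (Hmin (Z.to_nat (m - lo))).
  rewrite Z2Nat.id in Hmin by lia.
  replace (lo + (m - lo))%Z with m in Hmin by lia.
  specialize (Hmin Hm). lia.
Qed.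

Lemma psum_add (x : Z -> R) (i : Z) (p q : nat) :
  psum x i (p + q) = psum x i p + psum x (i + Z.of_nat p) q.
Proof.
  induction q as [|q IHq]; simpl.
  - rewrite Nat.add_0_r. lra.
  - rewrite Nat.add_succ_r. simpl. rewrite IHq.
    replace (i + Z.of_nat (p + q))%Z with (i + Z.of_nat p + Z.of_nat q)%Z by lia.
    lra.
Qed.

Lemma blocksum_add (x : Z -> R) (a b c : Z) :
  (a < b < c)%Z -> blocksum x a c = blocksum x a b + blocksum x b c.
Proof.
  intros Hord. unfold blocksum.
  replace (Z.to_nat (c - a)) with (Z.to_nat (b - a) + Z.to_nat (c - b))%nat by lia.
  rewrite psum_add.
  replace (a + Z.of_nat (Z.to_nat (b - a)))%Z with b by lia.
  reflexivity.
Qed.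

Lemma recmap_spec (x : Z -> R) (i : Z) : is_record_value x i (recmap x i).
Proof.
  unfold recmap. apply epsilon_spec.
  destruct (classic (exists n, recset x i n)) as [Hsome | Hnone].
  - destruct (Z_least_witness (recset x i) i) as [n Hn].
    + intros n [Hin _]. lia.
    + exact Hsome.
    + exists n. left. exact Hn.
  - exists i. right. split; [| reflexivity].
    intros n Hn. apply Hnone. exists n. exact Hn.
Qed.

Lemma recmap_ge (x : Z -> R) (i : Z) : (i <= recmap x i)%Z.
Proof.
  destruct (recmap_spec x i) as [[[Hlt _] _] | [_ Heq]]; lia.
Qed.

Lemma recmap_nested (x : Z -> R) (c b : Z) :
  (c < b < recmap x c)%Z -> (recmap x b <= recmap x c)%Z.
Proof.
  intros Hb.
  destruct (recmap_spec x c) as [[[_ Hc] Hleast] | [_ Hfix]]; [| lia].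
  assert (Hneg : blocksum x c b < 0).
  { destruct (Rlt_or_le (blocksum x c b) 0) as [Hlt | Hge]; [exact Hlt |].
    assert (recmap x c <= b)%Z by (apply Hleast; split; [lia | lra]).
    lia. }
  assert (Hrec : recset x b (recmap x c)).
  { split; [lia |].
    rewrite (blocksum_add x c b (recmap x c)) in Hc by lia. lra. }
  destruct (recmap_spec x b) as [[_ Hleast_b] | [Hnone _]].
  - exact (Hleast_b _ Hrec).
  - exfalso. exact (Hnone _ Hrec).
Qed.

Lemma recit_add (x : Z -> R) (p q : nat) (u : Z) :
  recit x (p + q) u = recit x p (recit x q u).
Proof. apply Nat.iter_add. Qed.

Lemma recit_pred (x : Z -> R) (m : nat) (u : Z) :
  (1 <= m)%nat -> recit x m u = recmap x (recit x (m - 1) u).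
Proof.
  intros Hm. destruct m as [|m]; [lia |].
  rewrite Nat.sub_1_r. reflexivity.
Qed.

Lemma recit_ge (x : Z -> R) (k : nat) (u : Z) : (u <= recit x k u)%Z.
Proof.
  induction k as [|k IHk]; [apply Z.le_refl |].
  change (recit x (S k) u) with (recmap x (recit x k u)).
  pose proof (recmap_ge x (recit x k u)). lia.
Qed.

Lemma recit_mono (x : Z -> R) (k k' : nat) (u : Z) :
  (k <= k')%nat -> (recit x k u <= recit x k' u)%Z.
Proof.
  intros Hk. replace k' with ((k' - k) + k)%nat by lia.
  rewrite recit_add. apply recit_ge.
Qed.

Lemma recit_nested (x : Z -> R) (k : nat) (d b : Z) :
  (d <= b < recit x k d)%Z -> (recmap x b <= recit x k d)%Z.
Proof.
  revert d. induction k as [|k IHk]; intros d Hb; [change (recit x 0 d) with d in Hb; lia |].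
  unfold recit in *. rewrite Nat.iter_succ_r in *.
  destruct (Z_le_gt_dec (recmap x d) b) as [Hle | Hgt]; [apply IHk; lia |].
  pose proof (recit_ge x k (recmap x d)) as Hpath. unfold recit in Hpath.
  destruct (Z.eq_dec d b) as [-> | Hne]; [lia |].
  pose proof (recmap_nested x d b). lia.
Qed.

Lemma same_component_common_iterate (x : Z -> R) (u v : Z) :
  same_component x u v -> exists k l, recit x k u = recit x l v.
Proof.
  induction 1 as [u v [_ Hv] | u | u v _ [k [l E]] | u v w _ [k [l E1]] _ [p [q E2]]].
  - exists 1%nat, 0%nat. exact (eq_sym Hv).
  - exists 0%nat, 0%nat. reflexivity.
  - exists l, k. exact (eq_sym E).
  - exists (p + k)%nat, (l + q)%nat.
    rewrite !recit_add, E1, <- (recit_add x p l), Nat.add_comm, recit_add, E2.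
    reflexivity.
Qed.

Definition first_meeting (x : Z -> R) (u v : Z) (m n : nat) : Prop :=
  (1 <= m)%nat /\ (1 <= n)%nat /\ recit x m u = recit x n v /\
  (forall m' n' : nat, (1 <= m')%nat -> (1 <= n')%nat ->
     recit x m' u = recit x n' v -> (m <= m')%nat /\ (n <= n')%nat).

Lemma rls_lt_iff (x : Z -> R) (u v : Z) :
  rls_lt x u v <->
  u <> v /\
  ((exists k : nat, (0 < k)%nat /\ v = recit x k u) \/
   (exists m n : nat, first_meeting x u v m n /\
      (recit x (m - 1) u < recit x (n - 1) v)%Z)).
Proof.
  unfold rls_lt, first_meeting.
  split; intros [Hne [Hanc | (m & n & Hmeet)]];
    split; try exact Hne; try (left; exact Hanc); right; exists m, n; tauto.
Qed.

Lemma first_meeting_exists (x : Z -> R) (u v : Z) (k l : nat) :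
  recit x k u = recit x l v -> exists m n, first_meeting x u v m n.
Proof.
  intros E.
  destruct (nat_least_witness
              (fun m => (1 <= m)%nat /\ exists n, (1 <= n)%nat /\ recit x m u = recit x n v))
    as [m [[Hm [n0 Hn0]] Hmin_m]].
  { exists (S k). split; [lia |]. exists (S l). split; [lia |].
    change (recmap x (recit x k u) = recmap x (recit x l v)). rewrite E. reflexivity. }
  destruct (nat_least_witness (fun n => (1 <= n)%nat /\ recit x m u = recit x n v))
    as [n [[Hn En] Hmin_n]]; [exists n0; exact Hn0 |].
  exists m, n. split; [exact Hm | split; [exact Hn | split; [exact En |]]].
  intros m' n' Hm' Hn' E'.
  assert (Hmm' : (m <= m')%nat) by (apply Hmin_m; eauto).
  split; [exact Hmm' |].
  destruct (le_lt_dec n n') as [Hle | Hlt]; [exact Hle |].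
  (* recit n' v <= recit n v = recit m u <= recit m' u = recit n' v *)
  pose proof (recit_mono x n' n v ltac:(lia)).
  pose proof (recit_mono x m m' u Hmm').
  apply Hmin_n. split; [exact Hn' | lia].
Qed.

Lemma first_meeting_sym (x : Z -> R) (u v : Z) (m n : nat) :
  first_meeting x u v m n -> first_meeting x v u n m.
Proof.
  intros (Hm & Hn & E & Hmin). repeat split; try assumption.
  - symmetry. exact E.
  - apply (Hmin n' m'); auto.
  - apply (Hmin n' m'); auto.
Qed.

Lemma first_meeting_last_step_moves (x : Z -> R) (u v : Z) (m n : nat) :
  first_meeting x u v m n -> (u < v)%Z ->
  recmap x (recit x (m - 1) u) <> recit x (m - 1) u.
Proof.
  intros (Hm & Hn & E & Hmin) Huv Hfix.
  rewrite (recit_pred x m u Hm), Hfix in E.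
  destruct (Nat.eq_dec m 1) as [-> | Hm2].
  - change (recit x (1 - 1) u) with u in E.
    pose proof (recit_ge x n v). lia.
  - destruct (Hmin (m - 1)%nat n ltac:(lia) Hn E). lia.
Qed.

Lemma first_meeting_last_steps_eq (x : Z -> R) (u v : Z) (m n : nat) :
  first_meeting x u v m n -> recit x (m - 1) u = recit x (n - 1) v ->
  m = 1%nat \/ n = 1%nat.
Proof.
  intros (Hm & Hn & _ & Hmin) E.
  destruct (Nat.eq_dec m 1) as [| Hm2]; [left; assumption |].
  destruct (Nat.eq_dec n 1) as [| Hn2]; [right; assumption |].
  destruct (Hmin (m - 1)%nat (n - 1)%nat ltac:(lia) ltac:(lia) E). lia.
Qed.

Lemma last_steps_ordered (x : Z -> R) (u v : Z) (p q : nat) :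
  (u <= v)%Z ->
  recmap x (recit x p u) = recmap x (recit x q v) ->
  recmap x (recit x p u) <> recit x p u ->
  (recit x p u <= recit x q v)%Z.
Proof.
  intros Huv E Hmoves.
  destruct (Z_le_gt_dec (recit x p u) (recit x q v)) as [Hab | Hba]; [exact Hab | exfalso].
  pose proof (recit_ge x q v). pose proof (recmap_ge x (recit x p u)).
  pose proof (recit_nested x p u (recit x q v) ltac:(lia)).
  lia.
Qed.

Lemma first_meeting_last_steps_le (x : Z -> R) (u v : Z) (m n : nat) :
  first_meeting x u v m n -> (u < v)%Z ->
  (recit x (m - 1) u <= recit x (n - 1) v)%Z.
Proof.
  intros Hmeet Huv.
  apply last_steps_ordered; [lia | | exact (first_meeting_last_step_moves x u v m n Hmeet Huv)].
  destruct Hmeet as (Hm & Hn & E & _).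
  rewrite <- (recit_pred x m u Hm), <- (recit_pred x n v Hn). exact E.
Qed.

Theorem lemma2p22 (x : Z -> R) (i j : Z) :
  same_component x i j -> ((i < j)%Z <-> rls_lt x i j).
Proof.
  intros Hcomp. rewrite rls_lt_iff. split.
  - intros Hij. split; [lia |].
    destruct (same_component_common_iterate x i j Hcomp) as [k [l E]].
    destruct (first_meeting_exists x i j k l E) as [m [n Hmeet]].
    destruct (proj1 (Z.lt_eq_cases _ _) (first_meeting_last_steps_le x i j m n Hmeet Hij))
      as [Hlt | Heq]; [right; eauto |].
    destruct (first_meeting_last_steps_eq x i j m n Hmeet Heq) as [-> | ->].
    + change (recit x (1 - 1) i) with i in Heq.
      pose proof (recit_ge x (n - 1) j). lia.
    + change (recit x (1 - 1) j) with j in Heq.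
      left. exists (m - 1)%nat. split; [| symmetry; exact Heq].
      destruct (Nat.eq_dec m 1) as [-> | Hm].
      * change (recit x (1 - 1) i) with i in Heq. lia.
      * destruct Hmeet as [Hm1 _]. lia.
  - intros [Hne [[k [_ ->]] | [m [n [Hmeet Hlt]]]]].
    + pose proof (recit_ge x k i). lia.
    + destruct (Z_lt_le_dec i j) as [Hij | Hji]; [exact Hij | exfalso].
      pose proof (first_meeting_last_steps_le x j i n m (first_meeting_sym x i j m n Hmeet)
                    ltac:(lia)).
      lia.
Qed.
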